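(* Let $G$ be a finite group of order $n>1$, and let $q$ and $p$ be the smallest and the largest prime divisors of $n$, respectively. Suppose that $$\psi(G)\geq \frac{1}{q}\,n\,\varphi(n).$$ Then either $G$ has a normal cyclic Sylow $p$-subgroup, or $G$ is solvable and has a cyclic maximal subgroup of index either $p$ or $p+1$.
   Context: For a finite group $G$, $\psi(G)=\sum_{g\in G} o(g)$ denotes the sum of the orders of all elements of $G$. $\varphi$ is Euler's totient function. *)

From mathcomp Require Import all_boot all_fingroup all_solvable.
Set Implicit Arguments. Unset Strict Implicit. Unset Printing Implicit Defensive.
Local Open Scope group_scope.

Definition psi (gT : finGroupType) (G : {set gT}) : nat := (\sum_(g in G) #[g])%N.

From mathcomp Require Import all_boot all_fingroup all_solvable.
From mathcomp Require Import integral_char zify.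
Set Implicit Arguments. Unset Strict Implicit. Unset Printing Implicit Defensive.

(* Let x have maximal order in G and t = |G : <[x]>|. As psi(G) < |G| #[x], the
   hypothesis yields t phi(n) < q n, and comparing prod p/(p-1) over the prime
   divisors of n with q shows t <= p + 1. If t < p, the number of Sylow
   p-subgroups divides t and is 1 mod p, so the Sylow p-subgroup of <[x]> is
   normal; for t = p + 1 the same count is 1 or p + 1. In the remaining cases
   <[x]> is maximal, and modulo its core it becomes a core-free maximal abelian
   subgroup Y of a group Q; such a Y is a TI subgroup, so exactly |Q : Y| elements
   of Q lie outside the conjugates of Y. For index p they form a normal Sylow
   p-subgroup complemented by Y; for index p + 1 the nontrivial ones form a single
   Y-orbit, so |Q| has two prime divisors and Burnside's p^a q^b theorem applies. *)

Lemma ltn_primes_gap (l p : nat) : prime l -> prime p -> l < p ->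
  l + 2 <= p \/ (l = 2 /\ p = 3).
Proof.
move=> pl pp lt_lp; have [|p_lt] := leqP (l + 2) p; first by left.
have p_eq : p = l.+1 by lia.
subst p; have := prime_gt1 pl; case: (even_prime pl) => [-> | odd_l]; first by right.
by case: (even_prime pp) => [|/=]; [lia | rewrite odd_l].
Qed.

Lemma prime_gt3_cases (p : nat) : prime p -> 3 < p -> p = 5 \/ 7 <= p.
Proof. by case: p => [|[|[|[|[|[|[|p]]]]]]] //; [left | right]. Qed.

Lemma sorted_primes_prod_bound (a : nat) (r : seq nat) :
  sorted ltn (a :: r) -> all prime (a :: r) ->
  a * \prod_(x <- a :: r) x <= (last a r + 2) * \prod_(x <- a :: r) x.-1
  \/ a :: r = [:: 2; 3] \/ a :: r = [:: 2; 3; 5].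
Proof.
elim/last_ind: r => [|r p IH].
  move=> _ /andP[/prime_gt1 a_gt1 _]; left; rewrite !big_seq1 /=.
  by rewrite -subn1; nia.
rewrite /= rcons_path all_rcons => /andP[srt lt_lp] /and3P[pa pp allr].
have allar : all prime (a :: r) by rewrite /= pa.
have pl := allP allar _ (mem_last a r).
have p_gt1 := prime_gt1 pp.
rewrite last_rcons -rcons_cons !big_rcons /=.
case: (IH srt allar) lt_lp => [le_aA|[[-> ->]|[-> ->]]] /= lt_lp.
- set B := \prod_(x <- a :: r) x.-1 in le_aA *.
  case: (ltn_primes_gap pl pp lt_lp) => [le_lp|[l2 p3]].
    left; have le_lpp : (last a r + 2) * p <= (p + 2) * p.-1.
      move: (last a r) le_lp => l le_lp.
      by have := leq_mul le_lp (leqnn p); rewrite -subn1; nia.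
    by have := leq_mul le_aA (leqnn p); have := leq_mul le_lpp (leqnn B); nia.
  right; left; subst p; suff r0 : r = [::] by move: l2; rewrite r0 => /= ->.
  case: r srt l2 {IH allr allar pl lt_lp le_aA B} => // b r srt /= l2.
  have := order_path_min ltn_trans srt; rewrite -/(all _ (b :: r)).
  by move/allP/(_ _ (mem_last b r)); rewrite l2; have := prime_gt1 pa; lia.
- case: (prime_gt3_cases pp lt_lp) => [-> | p_ge7]; first by right; right.
  by left; rewrite !big_cons !big_nil -subn1; nia.
- have [p5|p_ge7] := prime_gt3_cases pp (ltn_trans (isT : 3 < 5) lt_lp).
    by move: lt_lp; rewrite p5.
  by left; rewrite !big_cons !big_nil -subn1; nia.
Qed.

Lemma dvdn_succ_modn1 (p k : nat) :
  1 < p -> k %| p.+1 -> k %% p = 1 -> k = 1 \/ k = p.+1.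
Proof.
move=> p_gt1 k_dvd k_mod; have := dvdn_leq (ltn0Sn p) k_dvd.
rewrite leq_eqVlt ltnS leq_eqVlt => /or3P[/eqP-> | /eqP kp | lt_kp]; [by right | |].
  by move: k_mod; rewrite kp modnn.
by left; rewrite -k_mod modn_small.
Qed.

Lemma totient_mul_prod_primes (n : nat) : 0 < n ->
  totient n * \prod_(p <- primes n) p = n * \prod_(p <- primes n) p.-1.
Proof.
move=> n_gt0; rewrite (totientE n_gt0) -big_split /=.
rewrite [X in _ = X * _](prod_prime_decomp n_gt0) prime_decompE big_map -big_split /=.
rewrite !big_seq; apply: eq_bigr => p.
rewrite -logn_gt0; case: (logn p n) => // e _ /=; rewrite expnS; lia.
Qed.

Lemma dvdn_totient_leq_max_pdiv (n t : nat) : 1 < n -> t %| n ->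
  t * totient n < pdiv n * n -> t <= (max_pdiv n).+1.
Proof.
move=> n_gt1 t_dvd lt_tn; have n_gt0 : 0 < n by lia.
have nil_primes : primes n != [::] by rewrite primes_eq0 -leqNgt.
rewrite /pdiv /max_pdiv in lt_tn *.
have := totient_mul_prod_primes n_gt0; have := sorted_primes n.
have := all_prime_primes n.
have not_prime_factor s : prime s -> s \notin primes n -> t != s.
  by move=> ps; apply: contraNneq => t_s; rewrite mem_primes ps n_gt0 -t_s.
case: (primes n) nil_primes not_prime_factor lt_tn => // a r _ not_factor.
move=> lt_tn pr srt phi_n; rewrite /= in lt_tn *.
set A := \prod_(p <- a :: r) p in phi_n; set B := \prod_(p <- a :: r) p.-1 in phi_n.
have A_gt0 : 0 < A by rewrite /A big_seq prodn_cond_gt0 // => p /(allP pr)/prime_gt0.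
have lt_tB : t * B < a * A.
  have : t * totient n * A < a * n * A by rewrite ltn_pmul2r.
  by rewrite -!mulnA phi_n !(mulnCA _ n) ltn_pmul2l.
case: (sorted_primes_prod_bound srt pr) => [le_aA | [e|e]].
- rewrite -ltnS -addn2 -(ltn_pmul2r (_ : 0 < B)); first exact: leq_trans lt_tB le_aA.
  by rewrite /B big_seq prodn_cond_gt0 // => p /(allP pr)/prime_gt1; lia.
- move: lt_tB (not_factor 5 isT); rewrite /A /B; case: e => -> ->.
  by rewrite !big_cons !big_nil => /= lt_tB /(_ isT); lia.
- move: lt_tB (not_factor 7 isT); rewrite /A /B; case: e => -> ->.
  by rewrite !big_cons !big_nil => /= lt_tB /(_ isT); lia.
Qed.

Local Open Scope group_scope.

Lemma psi_lt_card_mul_order (gT : finGroupType) (G : {group gT}) (x : gT) :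
  1 < #|G| -> x \in G -> {in G, forall y, #[y] <= #[x]} -> psi G < #|G| * #[x].
Proof.
move=> G_gt1 Gx max_x.
have [y Gy nty] : exists2 y, y \in G & y != 1.
  by apply/trivgPn; rewrite -cardG_gt1.
have x_gt1 : 1 < #[x] by apply: leq_trans (max_x y Gy); rewrite order_gt1.
have le_sum : \sum_(y in G :\ 1) #[y] <= #|G :\ 1| * #[x].
  by rewrite -sum_nat_const leq_sum // => z /setD1P[_ /max_x].
by rewrite /psi (big_setD1 1) //= order1 (cardsD1 1 G) group1 mulnDl mul1n -addSn leq_add.
Qed.

Lemma exists_cycle_index_leq_max_pdiv (gT : finGroupType) (G : {group gT}) :
    1 < #|G| -> #|G| * totient #|G| <= pdiv #|G| * psi G ->
  exists2 x, x \in G & #|G : <[x]>| <= (max_pdiv #|G|).+1.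
Proof.
move=> G_gt1 le_psi.
have [x Gx max_x] := @arg_maxnP _ 1 (mem G) (fun y => #[y]) (group1 G).
have sXG : <[x]> \subset G by rewrite cycle_subG.
exists x => //; apply: dvdn_totient_leq_max_pdiv (dvdn_indexg G _) _ => //.
have lt_psi : pdiv #|G| * psi G < pdiv #|G| * (#|G| * #[x]).
  by rewrite ltn_pmul2l ?pdiv_gt0 // psi_lt_card_mul_order.
have := Lagrange sXG; rewrite -orderE -(ltn_pmul2l (order_gt0 x)).
move: (leq_ltn_trans le_psi lt_psi); nia.
Qed.

Lemma maximal_intermediate (gT : finGroupType) (M G H : {group gT}) :
  maximal M G -> M \subset H -> H \subset G -> H :=: M \/ H :=: G.
Proof.
move=> maxM; have /maximal_eqP[_] : maximal_eq M G by rewrite /maximal_eq maxM orbT.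
exact.
Qed.

Lemma class_supportD1_order (gT : finGroupType) (Y Q : {group gT}) (z : gT) :
  z \in class_support Y^# Q -> z != 1 /\ #[z] %| #|Y|.
Proof.
rewrite class_supportEr => /bigcupP[h _]; rewrite mem_conjg => /setD1P[ntz Yz].
split; last by rewrite -(orderJ z h^-1) order_dvdG.
by apply: contra ntz => /eqP ->; rewrite conj1g.
Qed.

Section CorefreeMaximalAbelian.

Variables (gT : finGroupType) (Q Y : {group gT}).
Hypotheses (maxY : maximal Y Q) (abY : abelian Y) (coreY : gcore Y Q = 1).

Let sYQ : Y \subset Q := proper_sub (maxgroupp maxY).

Let corefree_sub (N : {group gT}) : N \subset Y -> Q \subset 'N(N) -> N :=: 1.
Proof. by move=> sNY nNQ; apply/trivgP; rewrite -coreY gcore_max. Qed.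

Lemma corefree_normaliser : Y :!=: 1 -> 'N_Q(Y) = Y.
Proof.
move=> ntY; have sYN : Y \subset 'N_Q(Y) by rewrite subsetI sYQ normG.
case: (maximal_intermediate maxY sYN (subsetIl _ _)) => // NQ.
by case/eqP: ntY; apply: corefree_sub; rewrite // -NQ subsetIr.
Qed.

Lemma corefree_normedTI : Y :!=: 1 -> normedTI Y^# Q Y.
Proof.
move=> ntY; apply/normedTI_memJ_P; split; rewrite ?corefree_normaliser //.
  by apply: contra ntY; rewrite setD_eq0 subG1.
move=> a g /setD1P[nta Ya] Qg; apply/idP/idP => [/setD1P[ntag Yag] | Yg]; last first.
  by rewrite /conjg -(centsP abY g Yg a Ya) mulKg !inE nta Ya.
(* D := Y :&: Y :^ g is centralised by Y and Y :^ g, so 'N_Q(D) is Y or Q. *)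
pose D := Y :&: Y :^ g.
have cDY : Y \subset 'C(D) by rewrite sub_abelian_cent ?subsetIl.
have cDYg : Y :^ g \subset 'C(D) by rewrite sub_abelian_cent ?abelianJ ?subsetIr.
have sYND : Y \subset 'N_Q(D) by rewrite subsetI sYQ (subset_trans cDY) ?cent_sub.
case: (maximal_intermediate maxY sYND (subsetIl _ _)) => ND.
  have sYgY : Y :^ g \subset Y.
    by rewrite -{2}ND subsetI (subset_trans cDYg (cent_sub _)) andbT sub_conjg conjGid ?groupV.
  rewrite -corefree_normaliser // inE Qg; apply/normP/eqP.
  by rewrite eqEcard sYgY cardJg leqnn.
have D1 : D :=: 1 by apply: corefree_sub; rewrite ?subsetIl // -ND subsetIr.
have : a ^ g \in D by rewrite inE Yag memJ_conjg.
by rewrite D1 => /set1P ag1; rewrite ag1 eqxx in ntag.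
Qed.

Let S := class_support Y^# Q.

Let sSQ : S \subset Q.
Proof. by rewrite class_support_sub_norm ?normG // (subset_trans (subsetDl _ _)). Qed.

Lemma card_corefree_support_compl : Y :!=: 1 -> #|Q :\: S| = #|Q : Y|.
Proof.
move=> ntY; rewrite cardsDS // (card_support_normedTI (corefree_normedTI ntY)).
by rewrite -(Lagrange sYQ) (cardsD1 1 Y) group1 mulnDl mul1n addnK.
Qed.

Lemma corefree_prime_index_solvable p :
  prime p -> #|Q : Y| = p -> coprime p #|Y| -> solvable Q.
Proof.
move=> pp iQY pY'.
have [Y1 | ntY] := eqsVneq Y 1.
  by rewrite abelian_sol ?cyclic_abelian ?prime_cyclic // -indexg1 -Y1 iQY.
have cardQ : #|Q| = (#|Y| * p)%N by rewrite -iQY Lagrange.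
have [P sylP] := Sylow_exists p Q; have pP := pHall_pgroup sylP.
have cardP : #|P| = p.
  have Yp : (#|Y|`_p = 1)%N.
    by rewrite part_p'nat // p'natE // -prime_coprime // coprime_sym.
  rewrite (card_Hall sylP) cardQ partnM ?cardG_gt0 ?prime_gt0 // Yp mul1n.
  by rewrite part_pnat_id ?pnat_id.
have sPT : P \subset Q :\: S.
  apply/subsetP => z Pz; rewrite inE (subsetP (pHall_sub sylP)) // andbT.
  apply/negP => /class_supportD1_order[ntz dvd_zY]; case/negP: ntz.
  rewrite -order_eq1 (pnat_1 (mem_p_elt pP Pz)) // p'natE //.
  by rewrite -prime_coprime // (coprime_dvdr dvd_zY pY').
have defP : P :=: Q :\: S.
  by apply/eqP; rewrite eqEcard sPT (card_corefree_support_compl ntY) iQY cardP leqnn.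
have nPQ : P <| Q.
  by rewrite /normal (pHall_sub sylP) defP normsD ?normG ?class_support_norm.
have defQ : P * Y = Q.
  apply/eqP; rewrite eqEcard mul_subG ?(pHall_sub sylP) //= TI_cardMg.
    by rewrite cardP cardQ mulnC.
  by rewrite coprime_TIg // cardP.
rewrite (series_sol nPQ) (pgroup_sol pP) -defQ quotientMidl.
exact: abelian_sol (quotient_abelian _ abY).
Qed.

Lemma corefree_succ_prime_index_solvable p :
  prime p -> #|Q : Y| = p.+1 -> p %| #|Y| -> solvable Q.
Proof.
move=> pp iQY pY; have p_gt1 := prime_gt1 pp.
have ntY : Y :!=: 1 by apply: contraTneq pY => ->; rewrite cards1 gtnNdvd.
have TI := corefree_normedTI ntY.
pose R := (Q :\: S) :\ 1.
have cardR : #|R| = p.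
  have S1 : 1 \notin S by apply/negP => /class_supportD1_order[/eqP].
  move: (cardsD1 1 (Q :\: S)); rewrite card_corefree_support_compl // iQY.
  by rewrite !inE S1 group1 add1n => -[].
have nRQ : Q \subset 'N(R) by rewrite !normsD ?norms1 ?normG ?class_support_norm.
have [c Rc] : exists c, c \in R by apply/set0Pn; rewrite -card_gt0 cardR prime_gt0.
have [ntc Qc Sc'] : [/\ c != 1, c \in Q & c \notin S] by move: Rc; rewrite !inE => /and3P[].
have CYc : 'C_Y[c] = 1.
  apply/trivgP/subsetP => y /setIP[Yy /cent1P cyc]; apply/set1P/eqP/negPn/negP => nty.
  have Y'y : y \in Y^# by rewrite !inE nty.
  have /(subsetP (cent1_normedTI TI Y'y)) Yc : c \in 'C_Q[y] by rewrite inE Qc; apply/cent1P.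
  by case/negP: Sc'; apply: mem_class_support; rewrite !inE ntc.
have card_cY : #|c ^: Y| = #|Y| by rewrite -index_cent1 CYc indexg1.
have sCR : c ^: Y \subset R by rewrite class_sub_norm // (subset_trans sYQ nRQ).
have cardY : #|Y| = p.
  apply/eqP; rewrite eqn_leq -{1}cardR -card_cY subset_leq_card //=.
  by rewrite card_cY dvdn_leq.
have defR : c ^: Y = R by apply/eqP; rewrite eqEcard sCR cardR card_cY cardY leqnn.
(* Any prime divisor of |Q| other than p is the order of an element of R = c ^: Y. *)
apply: Burnside_p_a_q_b; apply: (@uniq_leq_size _ _ [:: p; #[c]]) => [|s].
  exact: primes_uniq.
rewrite mem_primes => /and3P[ps _ s_dvd]; rewrite !inE.
have [//|nsp] := eqVneq s p; have [z Qz oz] := Cauchy ps s_dvd.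
have Sz' : z \notin S.
  by apply/negP => /class_supportD1_order[_]; rewrite oz cardY dvdn_prime2 // (negPf nsp).
have : z \in R by rewrite !inE -order_gt1 oz prime_gt1 // Sz' Qz.
by rewrite -defR => /imsetP[y _ def_z]; rewrite -oz def_z orderJ eqxx orbT.
Qed.

End CorefreeMaximalAbelian.

Section CoreQuotient.

Variables (gT : finGroupType) (G X : {group gT}).
Hypothesis sXG : X \subset G.

Let L := gcore X G.
Let nLG : L <| G := gcore_normal sXG.
Let nLX : L <| X := normalS (gcore_sub X G) sXG nLG.

Lemma gcore_quotient_gcore : gcore (X / L) (G / L) = 1.
Proof.
set N := gcore (X / L) (G / L); pose M := (coset L @*^-1 N)%G.
have sMX : M \subset X by rewrite -(quotientGK nLX) morphpreS ?gcore_sub.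
have nMG : G \subset 'N(M).
  rewrite (subset_trans _ (morphpre_norm _ _)) //.
  by rewrite -sub_quotient_pre ?gcore_norm ?normal_norm.
apply/trivgP; change (N \subset [1 (coset_of L)]).
by rewrite -(cosetpreK N) -(trivg_quotient L) quotientS // gcore_max.
Qed.

Hypothesis abX : abelian X.

Lemma solvable_core_quotient : solvable (G / L) -> solvable G.
Proof. by rewrite (series_sol nLG) (abelian_sol (abelianS (gcore_sub X G) abX)). Qed.

Hypothesis maxX : maximal X G.

Let maxXL : maximal (X / L) (G / L).
Proof. by rewrite quotient_maximal ?normal_norm. Qed.

Let indexXL : #|G / L : X / L| = #|G : X|.
Proof. by rewrite index_quotient_eq ?subIset ?gcore_sub ?orbT ?normal_norm. Qed.

Lemma maximal_abelian_prime_index_solvable p :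
  prime p -> #|G : X| = p -> coprime p #|X / L| -> solvable G.
Proof.
move=> pp iGX pXL'; apply: solvable_core_quotient.
by apply: (corefree_prime_index_solvable maxXL _ gcore_quotient_gcore pp);
  rewrite ?quotient_abelian ?indexXL.
Qed.

Lemma maximal_abelian_succ_prime_index_solvable p :
  prime p -> #|G : X| = p.+1 -> p %| #|X / L| -> solvable G.
Proof.
move=> pp iGX pXL; apply: solvable_core_quotient.
by apply: (corefree_succ_prime_index_solvable maxXL _ gcore_quotient_gcore pp);
  rewrite ?quotient_abelian ?indexXL.
Qed.

End CoreQuotient.

Section AbelianSubgroupOfSmallIndex.

Variables (gT : finGroupType) (G X : {group gT}) (p : nat).
Hypotheses (pp : prime p) (sXG : X \subset G) (abX : abelian X).

Let P := 'O_p(X)%G.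
Let sylXP : p.-Hall(X) P := nilpotent_pcore_Hall p (abelian_nil abX).
Let sPX : P \subset X := pcore_sub p X.
Let nPX : X \subset 'N(P) := normal_norm (pcore_normal p X).
Let sXN : X \subset 'N_G(P). Proof. by rewrite subsetI sXG nPX. Qed.

Lemma pcore_Sylow_p'index : ~~ (p %| #|G : X|) -> p.-Sylow(G) P.
Proof.
move=> pG'; apply/pHallP; split; first exact: subset_trans sPX sXG.
have index_p : (#|G : X|`_p = 1)%N by rewrite part_p'nat // p'natE.
by rewrite (card_Hall sylXP) -(Lagrange sXG) partnM ?cardG_gt0 ?indexg_gt0 // index_p muln1.
Qed.

Lemma p'index_normal_cyclic_Sylow : cyclic X -> ~~ (p %| #|G : X|) ->
    #|'Syl_p(G)| = 1%N ->
  exists2 S : {group gT}, S \in 'Syl_p(G) & (S <| G) && cyclic S.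
Proof.
move=> cX pG' Syl1; have sylP := pcore_Sylow_p'index pG'.
exists P; first by rewrite inE.
rewrite (cyclicS sPX cX) andbT /normal (pHall_sub sylP) /=.
move: Syl1; rewrite (card_Syl sylP) => /eqP; rewrite indexg_eq1.
by move/subset_trans; apply; exact: subsetIr.
Qed.

Lemma card_Syl_dvd_p'index : ~~ (p %| #|G : X|) -> #|'Syl_p(G)| %| #|G : X|.
Proof. by move=> pG'; rewrite (card_Syl (pcore_Sylow_p'index pG')) indexgS. Qed.

Lemma index_lt_normal_cyclic_Sylow : cyclic X -> #|G : X| < p ->
  exists2 S : {group gT}, S \in 'Syl_p(G) & (S <| G) && cyclic S.
Proof.
move=> cX ltp; have pG' : ~~ (p %| #|G : X|) by rewrite gtnNdvd ?indexg_gt0.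
apply: p'index_normal_cyclic_Sylow => //; apply/eqP.
have le_Syl := dvdn_leq (indexg_gt0 G X) (card_Syl_dvd_p'index pG').
by rewrite -(modn_small (leq_ltn_trans le_Syl ltp)) card_Syl_mod.
Qed.

Lemma prime_index_solvable : #|G : X| = p -> solvable G.
Proof.
move=> iGX; have maxX : maximal X G by rewrite p_index_maximal ?iGX.
have [S sylS sPS] := Sylow_superset (subset_trans sPX sXG) (pcore_pgroup p X).
have pS := pHall_pgroup sylS.
have cardS : #|S| = (#|P| * p)%N.
  rewrite (card_Hall sylS) (card_Hall sylXP) -(Lagrange sXG) iGX.
  by rewrite (partnM _ (cardG_gt0 X) (prime_gt0 pp)) (part_pnat_id (pnat_id pp)).
have nPS : S \subset 'N(P).
  apply/normal_norm/(p_maximal_normal pS)/p_index_maximal => //.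
  by rewrite -divgS // cardS mulKn.
have sSN : S \subset 'N_G(P) by rewrite subsetI (pHall_sub sylS).
have nPG : G \subset 'N(P).
  case: (maximal_intermediate maxX sXN (subsetIl _ _)) => [NX | <-]; last first.
    exact: subsetIr.
  have sSP : S \subset P.
    rewrite NX in sSN; apply: pcore_max pS _.
    by rewrite /normal sSN (subset_trans (sub_abelian_cent abX sSN) (cent_sub _)).
  by have := subset_leq_card sSP; rewrite cardS leqNgt ltn_Pmulr ?prime_gt1.
apply: (maximal_abelian_prime_index_solvable sXG abX maxX pp iGX).
rewrite card_quotient ?(subset_trans sXG (gcore_norm X G)) // prime_coprime // -p'natE //.
by apply: pnat_dvd (indexgS X (gcore_max sPX nPG)) _; case/and3P: sylXP.
Qed.

Section SelfNormalisingSylow.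

Hypotheses (iGX : #|G : X| = p.+1) (sylP : p.-Sylow(G) P) (NX : 'N_G(P) = X).

Lemma self_normalising_Sylow_maximal : maximal X G.
Proof.
have ntGX : ~~ (G \subset X) by rewrite -indexg_gt1 iGX ltnS prime_gt0.
apply/maxgroupP; split; first by rewrite properE sXG.
move=> H /andP[sHG nsGH] sXH; apply/eqP; rewrite eq_sym eqEsubset sXH /=.
have sylHP : p.-Sylow(H) P := pHall_subl (subset_trans sPX sXH) sHG sylP.
have NHX : 'N_H(P) = X.
  by apply/eqP; rewrite eqEsubset subsetI sXH nPX -NX setSI.
have lt_HX_p : #|H : X| < p.
  rewrite -indexg_gt1 in nsGH; have := Lagrange_index sHG sXH.
  by rewrite iGX; have := prime_gt1 pp; nia.
by rewrite -indexg_eq1 -(modn_small lt_HX_p) -NHX -(card_Syl sylHP) card_Syl_mod.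
Qed.

Lemma self_normalising_Sylow_solvable : solvable G.
Proof.
pose L := gcore X G.
have maxX := self_normalising_Sylow_maximal.
apply: (maximal_abelian_succ_prime_index_solvable sXG abX maxX pp iGX).
(* Otherwise P \subset L, and the Frattini argument gives G = L 'N_G(P) = X. *)
apply: contraT => pXL'.
have sPL : P \subset L.
  have nLP : P \subset 'N(L) := subset_trans (subset_trans sPX sXG) (gcore_norm X G).
  rewrite -quotient_sub1 //; apply/trivgP/eqP; rewrite trivg_card1; apply/eqP.
  apply: (pnat_1 (quotient_pgroup _ (pcore_pgroup _ _))).
  by apply: pnat_dvd (cardSg (quotientS L sPX)) _; rewrite p'natE.
have sylLP : p.-Sylow(L) P := pHall_subl sPL (subset_trans (gcore_sub X G) sXG) sylP.
have := Frattini_arg (gcore_normal sXG) sylLP; rewrite NX mulSGid ?gcore_sub // => GX.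
by move: iGX (prime_gt1 pp); rewrite GX indexgg => -[<-].
Qed.

End SelfNormalisingSylow.

Lemma succ_prime_index_cases : cyclic X -> #|G : X| = p.+1 ->
  (exists2 S : {group gT}, S \in 'Syl_p(G) & (S <| G) && cyclic S)
  \/ (solvable G /\ maximal X G).
Proof.
move=> cX iGX; have p_gt1 := prime_gt1 pp.
have pG' : ~~ (p %| #|G : X|).
  by rewrite iGX -addn1 dvdn_addr // dvdn1 neq_ltn p_gt1 orbT.
have sylP := pcore_Sylow_p'index pG'.
have dvd_Syl := card_Syl_dvd_p'index pG'; rewrite iGX in dvd_Syl.
case: (dvdn_succ_modn1 p_gt1 dvd_Syl (card_Syl_mod G pp)) => [Syl1 | Syl_p1].
  by left; apply: p'index_normal_cyclic_Sylow.
have NX : 'N_G(P) = X.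
  apply/eqP; rewrite eq_sym eqEsubset sXN -indexg_eq1 -(eqn_pmul2l (ltn0Sn p)).
  by rewrite -{1}Syl_p1 (card_Syl sylP) (Lagrange_index (subsetIl G _) sXN) iGX muln1 eqxx.
right; split; first exact: self_normalising_Sylow_solvable.
exact: self_normalising_Sylow_maximal.
Qed.

End AbelianSubgroupOfSmallIndex.

Theorem theorem11 (gT : finGroupType) (G : {group gT}) :
  (1 < #|G|)%N ->
  (#|G| * totient #|G| <= pdiv #|G| * psi G)%N ->
  (exists2 P : {group gT}, P \in 'Syl_(max_pdiv #|G|)(G) & (P <| G) && cyclic P)
  \/
  (solvable G /\
   exists2 M : {group gT}, maximal M G &
     cyclic M && ((#|G : M| == max_pdiv #|G|) || (#|G : M| == (max_pdiv #|G|).+1))).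
Proof.
move=> G_gt1 le_psi; have [x Gx le_index] := exists_cycle_index_leq_max_pdiv G_gt1 le_psi.
have pp := max_pdiv_prime G_gt1; set p := max_pdiv #|G| in pp le_index *.
have sXG : <[x]> \subset G by rewrite cycle_subG.
have cX := cycle_cyclic x; have abX := cyclic_abelian cX.
case: (ltngtP #|G : <[x]>| p) => [lt_p | gt_p | eq_p].
- by left; apply: index_lt_normal_cyclic_Sylow pp sXG abX cX lt_p.
- have eq_p1 : #|G : <[x]>| = p.+1 by apply/eqP; rewrite eqn_leq le_index.
  case: (succ_prime_index_cases pp sXG abX cX eq_p1) => [|[solG maxX]]; first by left.
  by right; split => //; exists <[x]>%G; rewrite // cX eq_p1 eqxx orbT.
right; split; first exact: prime_index_solvable pp sXG abX eq_p.
by exists <[x]>%G; rewrite ?p_index_maximal ?eq_p // cX eqxx.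
Qed.
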